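(* An inverse semigroup $S$ is $E$-unitary if and only if there exist a topological space $X$ and a topologically principal topological partial action $\theta=(\{X_s\}_{s\in S},\{\theta_s\}_{s\in S})$ of $S$ on $X$ such that (i) $\theta$ factors through $\mathbf{G}(S)$, i.e. there is a partial action $\widetilde\theta=(\{X_{[s]}\}_{[s]\in\mathbf{G}(S)},\{\widetilde\theta_{[s]}\}_{[s]\in\mathbf{G}(S)})$ of $\mathbf{G}(S)$ on $X$ with $\widetilde\theta_{[s]}(x)=\theta_s(x)$ for all $s\in S$ and $x\in X_{s^*}$; and (ii) $E(S)=\{s\in S:\theta_s\text{ is an idempotent of }\mathcal{I}(X)\}$.
   Context: Inverse semigroups: $E(S)$ idempotents; $s\le t$ iff $s=ts^*s$. $S$ is $E$-unitary if $e\le s$ with $e\in E(S)$ implies $s\in E(S)$. $\mathbf{G}(S)$ is the maximal group image: the quotient of $S$ by the congruence $s\sim t$ iff there is $u\in S$ with $u\le s$ and $u\le t$; $[s]$ denotes the class of $s$. $\mathcal{I}(X)$ is the inverse semigroup of partial bijections of $X$; its idempotents are identity maps of subsets. A topological partial action of $S$ (or of a group, viewed as an inverse semigroup) on $X$: open $X_s$, homeomorphisms $\theta_s:X_{s^*}\to X_s$ such that $s\mapsto\theta_s$ is a partial homomorphism into $\mathcal{I}(X)$ ($\theta_{s^*}=\theta_s^{-1}$, $\theta_s\theta_t\le\theta_{st}$, $s\le t\Rightarrow\theta_s\le\theta_t$) and $X=\bigcup_{e\in E(S)}X_e$. With $S_x=\{s:x\in X_{s^*}\}$, let $\Lambda(\theta)$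 be the set of $x\in X$ such that every $s\in S_x$ with $\theta_s(x)=x$ admits $e\in E(S)\cap S_x$ with $e\le s$; $\theta$ is topologically principal if $\Lambda(\theta)$ is dense in $X$. *)

From HB Require Import structures.
From mathcomp Require Import all_boot all_order.
From mathcomp Require Import all_classical all_reals all_analysis.
Set Implicit Arguments. Unset Strict Implicit. Unset Printing Implicit Defensive.
Local Open Scope classical_set_scope.

(* An inverse semigroup: a semigroup with an involution-like operation s^* such
   that s s^* s = s, s^* s s^* = s^*, and idempotents commute (this is the
   standard equivalent of "every element has a unique inverse", with s^* that
   unique inverse). *)
Record invSemigroup := InvSemigroup {
  isg_car :> Type;
  isg_mul : isg_car -> isg_car -> isg_car;
  isg_star : isg_car -> isg_car;
  isg_mulA : forall a b c, isg_mul a (isg_mul b c) = isg_mul (isg_mul a b) c;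
  isg_regular : forall s, isg_mul (isg_mul s (isg_star s)) s = s;
  isg_regular_star : forall s,
      isg_mul (isg_mul (isg_star s) s) (isg_star s) = isg_star s;
  isg_idem_comm : forall e f, isg_mul e e = e -> isg_mul f f = f ->
      isg_mul e f = isg_mul f e
}.

Section InverseSemigroups.
Variable S : invSemigroup.
Local Notation "a * b" := (isg_mul a b).
Local Notation "s ^*" := (isg_star s).

Definition idem (e : S) : Prop := e * e = e.

Definition nleq (s t : S) : Prop := s = t * (s^* * s).

Definition E_unitary : Prop :=
  forall e s : S, idem e -> nleq e s -> idem s.

(* the minimum group congruence: s ~ t iff some u is below both;
   G(S) = S/~ and [s] is the ~-class of s *)
Definition sigma (s t : S) : Prop := exists u, nleq u s /\ nleq u t.

(* A topological partial action of S on X: X_s = D s, theta_s = th s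
   (a total function whose values are only relevant on X_{s^*}). *)
Definition top_partial_action (X : topologicalType)
    (D : S -> set X) (th : S -> X -> X) : Prop :=
  (forall s, open (D s)) /\
  (* theta_s : X_{s^*} -> X_s with theta_{s^*} = theta_s^{-1}; together with the
     same statement for s^* this makes theta_s a bijection X_{s^*} -> X_s *)
  (forall s x, D (s^*) x -> D s (th s x) /\ th (s^*) (th s x) = x) /\
  (* theta_s continuous on X_{s^*} (hence homeomorphism, applying it to s^* ) *)
  (forall s, {within D (s^*), continuous (th s)}) /\
  (* theta_s theta_t <= theta_{st} in I(X) *)
  (forall s t x, D (t^*) x -> D (s^*) (th t x) ->
      D ((s * t)^*) x /\ th (s * t) x = th s (th t x)) /\
  (* s <= t implies theta_s <= theta_t in I(X) *)
  (forall s t, nleq s t ->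
      (forall x, D (s^*) x -> D (t^*) x /\ th s x = th t x)) /\
  (forall x, exists e, idem e /\ D e x).

Definition Lambda (X : topologicalType) (D : S -> set X) (th : S -> X -> X)
  : set X :=
  [set x | forall s, D (s^*) x -> th s x = x ->
             exists e, idem e /\ D (e^*) x /\ nleq e s].

Definition top_principal (X : topologicalType) (D : S -> set X)
    (th : S -> X -> X) : Prop := dense (Lambda D th).

(* It is given as a
   family indexed by representatives s in S of the classes [s], required to be
   well defined on classes: X_{[s]} = Y s, widetilde-theta_{[s]} = ph s.
   Group operations of G(S): [s][t] = [st], [s]^{-1} = [s^*]; the natural order
   of a group is equality, and its idempotents are the [s] with [s][s] = [s]. *)
Definition GS_top_partial_action (X : topologicalType)
    (Y : S -> set X) (ph : S -> X -> X) : Prop :=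
  (forall s t, sigma s t ->
      Y s = Y t /\ (forall x, Y (s^*) x -> ph s x = ph t x)) /\
  (forall s, open (Y s)) /\
  (forall s x, Y (s^*) x -> Y s (ph s x) /\ ph (s^*) (ph s x) = x) /\
  (forall s, {within Y (s^*), continuous (ph s)}) /\
  (forall s t x, Y (t^*) x -> Y (s^*) (ph t x) ->
      Y ((s * t)^*) x /\ ph (s * t) x = ph s (ph t x)) /\
  (* [s] <= [t] (i.e. [s] = [t]) implies ph_[s] <= ph_[t] *)
  (forall s t, sigma s t ->
      (forall x, Y (s^*) x -> Y (t^*) x /\ ph s x = ph t x)) /\
  (* X = union of X_g over idempotents g = [s] of G(S) *)
  (forall x, exists s, sigma (s * s) s /\ Y s x).

(* theta_s is an idempotent of I(X): theta_s o theta_s = theta_s as partial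
   bijections (same domain, same values). *)
Definition I_idem (X : topologicalType) (D : S -> set X) (th : S -> X -> X)
    (s : S) : Prop :=
  (forall x, D (s^*) x <-> (D (s^*) x /\ D (s^*) (th s x))) /\
  (forall x, D (s^*) x -> th s (th s x) = th s x).

End InverseSemigroups.

(* If S is E-unitary, then sigma-related elements s, t are compatible (s t^* is
   idempotent), so they agree wherever both are defined.  Hence the action of S on
   itself by left multiplication, with s defined on the right ideal s s^* S,
   factors through G(S).  It is topologically principal since s p = p forces
   p p^* <= s, and theta_s is idempotent in I(S) exactly when s s = s (evaluate
   at s^* s).  Conversely, if theta factors through G(S) and an idempotent e lies
   below s, then [s] = [e] is idempotent in G(S), so theta_s fixes its domain
   pointwise; theta_s is then an idempotent of I(X), and s is in E(S) by (ii). *)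

From mathcomp Require Import all_boot all_order.
From mathcomp Require Import all_classical all_reals all_analysis.
Set Implicit Arguments.
Unset Strict Implicit.
Local Open Scope classical_set_scope.

Section InverseSemigroupTheory.
Variable S : invSemigroup.
Local Notation "a * b" := (isg_mul a b).
Local Notation "s ^*" := (isg_star s).
Implicit Types a e f s t u v w x z : S.

Let mulA a b c : a * (b * c) = a * b * c. Proof. exact: isg_mulA. Qed.

Lemma regularA s : s * (s^* * s) = s.
Proof. by rewrite mulA isg_regular. Qed.

Lemma regular_starA s : s^* * (s * s^*) = s^*.
Proof. by rewrite mulA isg_regular_star. Qed.

Lemma idem_comm e f : idem e -> idem f -> e * f = f * e.
Proof. exact: isg_idem_comm. Qed.

Lemma idem_starl s : idem (s^* * s).
Proof. by rewrite /idem mulA isg_regular_star. Qed.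

Lemma idem_starr s : idem (s * s^*).
Proof. by rewrite /idem mulA isg_regular. Qed.

Lemma star_unique a x : a * x * a = a -> x * a * x = x -> x = a^*.
Proof.
move=> axa xax.
have idem_xa : idem (x * a) by rewrite /idem mulA xax.
have idem_ax : idem (a * x) by rewrite /idem mulA axa.
have x_eq : x = a^* * a * x.
  transitivity (x * a * (a^* * a) * x); first by rewrite -(mulA x a) regularA xax.
  by rewrite (idem_comm idem_xa (idem_starl a)) -!mulA [x * (a * x)]mulA xax.
have star_eq : a^* = a^* * a * x.
  transitivity (a^* * (a * x * a) * a^*); first by rewrite axa isg_regular_star.
  rewrite -mulA -(mulA (a * x)) (idem_comm idem_ax (idem_starr a)).
  by rewrite !mulA isg_regular_star.
by rewrite x_eq -star_eq.
Qed.

Lemma starK s : s^*^* = s.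
Proof. by symmetry; apply: star_unique; rewrite ?isg_regular ?isg_regular_star. Qed.

Lemma star_idem e : idem e -> e^* = e.
Proof. by move=> ee; symmetry; apply: star_unique; rewrite ?ee. Qed.

Lemma star_mul s t : (s * t)^* = t^* * s^*.
Proof.
have comm_st := idem_comm (idem_starl s) (idem_starr t).
symmetry; apply: star_unique.
  transitivity (s * ((t * t^*) * (s^* * s)) * t); first by rewrite -!mulA.
  by rewrite -comm_st !mulA isg_regular -!mulA regularA.
transitivity (t^* * ((s^* * s) * (t * t^*)) * s^*); first by rewrite -!mulA.
by rewrite comm_st !mulA isg_regular_star -!mulA regular_starA.
Qed.

Lemma idem_mul e f : idem e -> idem f -> idem (e * f).
Proof.
move=> ee ff; rewrite /idem.
transitivity (e * (f * e) * f); first by rewrite !mulA.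
by rewrite -(idem_comm ee ff) !mulA ee -mulA ff.
Qed.

Lemma idem_conj t e : idem e -> idem (t^* * e * t).
Proof.
move=> ee; rewrite /idem.
transitivity (t^* * (e * (t * t^*)) * e * t); first by rewrite !mulA.
by rewrite (idem_comm ee (idem_starr t)) !mulA isg_regular_star -(mulA t^* e) ee.
Qed.

Lemma mul_idem_conj t e : idem e -> e * t = t * (t^* * e * t).
Proof.
by move=> ee; rewrite !mulA (idem_comm (idem_starr t) ee) -!mulA regularA.
Qed.

Lemma star_mul_idem u f : idem f -> (u * f)^* * (u * f) = u^* * u * f.
Proof.
move=> ff; rewrite star_mul (star_idem ff).
transitivity (f * (u^* * u) * f); first by rewrite !mulA.
by rewrite (idem_comm ff (idem_starl u)) -mulA ff.
Qed.

Lemma nleq_mul_idem a f : idem f -> nleq (a * f) a.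
Proof.
by move=> ff; rewrite /nleq star_mul_idem // !mulA isg_regular.
Qed.

Lemma nleqP u s : nleq u s <-> exists2 f, idem f & u = s * f.
Proof.
split; first by move=> us; exists (u^* * u); [exact: idem_starl | exact: us].
by case=> f ff ->; exact: nleq_mul_idem.
Qed.

Lemma nleq_refl u : nleq u u.
Proof. by rewrite /nleq regularA. Qed.

Lemma nleq_trans z u s : nleq z u -> nleq u s -> nleq z s.
Proof.
move=> /nleqP[e ee ->] /nleqP[f ff ->].
by rewrite -mulA; exact: nleq_mul_idem (idem_mul ff ee).
Qed.

Lemma nleq_star u s : nleq u s -> nleq u^* s^*.
Proof.
move=> /nleqP[e ee ->].
rewrite star_mul (star_idem ee) (mul_idem_conj s^* ee).
exact: nleq_mul_idem (idem_conj _ ee).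
Qed.

Lemma nleq_mul u s v t : nleq u s -> nleq v t -> nleq (u * v) (s * t).
Proof.
move=> /nleqP[e ee ->] /nleqP[f ff ->].
have -> : s * e * (t * f) = s * t * (t^* * e * t * f).
  by rewrite -(mulA s) (mulA e) (mul_idem_conj t ee) !mulA.
exact: nleq_mul_idem (idem_mul (idem_conj t ee) ff).
Qed.

Lemma nleq_dom z u : nleq z u -> u^* * u * (z^* * z) = z^* * z.
Proof.
move=> /nleqP[f ff ->].
by rewrite star_mul_idem // mulA (idem_starl u).
Qed.

Lemma sigma_refl s : sigma s s.
Proof. by exists s; split; exact: nleq_refl. Qed.

Lemma sigma_sym s t : sigma s t -> sigma t s.
Proof. by case=> u [us ut]; exists u. Qed.

Lemma sigma_trans s t w : sigma s t -> sigma t w -> sigma s w.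
Proof.
case=> u [us ut]; case=> v [vt vw]; exists (u * (v^* * v)); split.
  exact: nleq_trans (nleq_mul_idem u (idem_starl v)) us.
have -> : u * (v^* * v) = v * (u^* * u).
  rewrite [in LHS]ut [in RHS]vt -!(mulA t).
  by rewrite (idem_comm (idem_starl u) (idem_starl v)).
exact: nleq_trans (nleq_mul_idem v (idem_starl u)) vw.
Qed.

Lemma sigma_star s t : sigma s t -> sigma s^* t^*.
Proof. by case=> u [us ut]; exists u^*; split; exact: nleq_star. Qed.

Lemma sigma_mul s s' t t' : sigma s s' -> sigma t t' -> sigma (s * t) (s' * t').
Proof.
by case=> u [us us']; case=> v [vt vt']; exists (u * v); split; exact: nleq_mul.
Qed.

Lemma dom_mul s t x : t^* * t * x = x -> s^* * s * (t * x) = t * x ->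
  (s * t)^* * (s * t) * x = x.
Proof.
move=> tx stx; rewrite star_mul.
transitivity (t^* * (s^* * s * (t * x))); first by rewrite !mulA.
by rewrite stx mulA tx.
Qed.

Lemma E_unitary_sigma_idem s t : E_unitary S -> sigma s t -> idem (s * t^*).
Proof.
move=> HE [u [us ut]]; apply: (HE (u * u^*)); first exact: idem_starr.
exact: nleq_mul us (nleq_star ut).
Qed.

Lemma E_unitary_sigma_act s t x : E_unitary S -> sigma s t ->
  s^* * s * x = x -> t^* * t * x = x -> s * x = t * x.
Proof.
move=> HE st sx tx.
have idem_st := E_unitary_sigma_idem HE st.
have st_star : t * s^* = s * t^* by rewrite -(star_idem idem_st) star_mul starK.
(* the idempotent s t^* maps each of s x, t x to the other *)
have sxE : s * x = s * t^* * (t * x) by rewrite -{1}tx !mulA.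
have txE : t * x = s * t^* * (s * x) by rewrite -{1}sx !mulA -st_star.
by rewrite sxE txE mulA idem_st.
Qed.

End InverseSemigroupTheory.

Lemma discrete_within_continuous (T : discreteTopologicalType)
    (U : topologicalType) (A : set T) (f : T -> U) : {within A, continuous f}.
Proof.
apply: continuous_subspaceT => x B /= /nbhs_singleton Bfx.
by rewrite nbhs_principalE; exact/principal_filterP.
Qed.

Section LeftRegularAction.
Variable S : invSemigroup.
Local Notation "a * b" := (isg_mul a b).
Local Notation "s ^*" := (isg_star s).
Implicit Types a b c s t : S.

Let mulA a b c : a * (b * c) = a * b * c. Proof. exact: isg_mulA. Qed.

Definition Sdisc : topologicalType := discrete_topology {classic S}.

Definition left_dom s : set Sdisc := [set p | s * s^* * p = p].
Definition left_act s (p : Sdisc) : Sdisc := s * p.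

Lemma left_act_top_partial_action : top_partial_action left_dom left_act.
Proof.
rewrite /left_dom /left_act; split; first by move=> s; exact: discrete_open.
split.
  move=> s p /=; rewrite starK => sp.
  by split; rewrite mulA ?isg_regular.
split; first by move=> s; exact: discrete_within_continuous.
split.
  move=> s t p /=; rewrite !starK => tp sp.
  by split; [exact: dom_mul | rewrite mulA].
split.
  move=> s t st p /=; rewrite !starK => sp; split.
    by rewrite -{1}sp mulA (nleq_dom st) sp.
  by rewrite {1}st -mulA sp.
move=> p; exists (p * p^*); split; first exact: idem_starr.
by rewrite /= (star_idem (idem_starr p)) (idem_starr p) isg_regular.
Qed.

Lemma Lambda_left_act : Lambda left_dom left_act = setT.
Proof.
apply/seteqP; split=> // p _ s; rewrite /left_dom /left_act /= starK => _ sp.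
have pp := idem_starr p.
exists (p * p^*); split=> //; rewrite /= starK (star_idem pp) pp isg_regular.
by split=> //; rewrite /nleq (star_idem pp) pp mulA sp.
Qed.

Lemma left_act_top_principal : top_principal left_dom left_act.
Proof. by rewrite /top_principal Lambda_left_act => O [p Op] _; exists p. Qed.

Lemma left_act_I_idem s : idem s <-> I_idem left_dom left_act s.
Proof.
rewrite /I_idem /left_dom /left_act /= starK; split.
  move=> ss; rewrite (star_idem ss) ss.
  by split=> p; [split=> [sp|[]//]; rewrite !sp | move=> sp; rewrite !sp].
case=> _ /(_ (s^* * s)); rewrite (idem_starl s) regularA.
by apply.
Qed.

Definition class_dom s : set Sdisc :=
  [set p | exists2 t, sigma t s & t^* * t * p = p].
Definition class_ran s : set Sdisc := class_dom s^*.

(* Off [class_dom s] the value is junk; on it, [class_actE] shows that the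
   chosen representative t does not matter. *)
Definition class_act s (p : Sdisc) : Sdisc :=
  if pselect (class_dom s p) is left dom_p then s2val (cid2 dom_p) * p else p.

Hypothesis HE : E_unitary S.

Lemma class_actE s t (p : Sdisc) :
  sigma t s -> t^* * t * p = p -> class_act s p = t * p.
Proof.
move=> ts tp; rewrite /class_act; case: pselect => [dom_p|]; last first.
  by case; exists t.
case: (cid2 dom_p) => u us up /=.
exact: E_unitary_sigma_act HE (sigma_trans us (sigma_sym ts)) up tp.
Qed.

Lemma class_dom_sigma s t : sigma s t -> class_dom s = class_dom t.
Proof.
move=> st; apply/seteqP; split=> p [u us up]; exists u => //.
  exact: sigma_trans us st.
exact: sigma_trans us (sigma_sym st).
Qed.

Lemma class_act_GS_top_partial_action :
  GS_top_partial_action class_ran class_act.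
Proof.
rewrite /class_ran; split.
  move=> s t st; split; first exact/class_dom_sigma/sigma_star.
  move=> p; rewrite starK => -[u us up].
  by rewrite (class_actE us up) (class_actE (sigma_trans us st) up).
split; first by move=> s; exact: discrete_open.
split.
  move=> s p; rewrite starK => -[u us up]; rewrite (class_actE us up).
  have up' : u^*^* * u^* * (u * p) = u * p by rewrite starK mulA isg_regular.
  split; first by exists u^* => //; exact: sigma_star.
  by rewrite (class_actE (sigma_star us) up') mulA.
split; first by move=> s; exact: discrete_within_continuous.
split.
  move=> s t p; rewrite !starK => -[u ut up].
  rewrite (class_actE ut up) => -[v vs vp].
  have vup := dom_mul up vp.
  split; first by exists (v * u) => //; exact: sigma_mul.
  by rewrite (class_actE vs vp) (class_actE (sigma_mul vs ut) vup) mulA.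
split.
  move=> s t st p; rewrite !starK => -[u us up]; split.
    by exists u => //; exact: sigma_trans us st.
  by rewrite (class_actE us up) (class_actE (sigma_trans us st) up).
move=> p; exists (p * p^*); split.
  by rewrite (idem_starr p); exact: sigma_refl.
exists (p * p^*)^*; first exact: sigma_refl.
by rewrite starK (star_idem (idem_starr p)) (idem_starr p) isg_regular.
Qed.

Lemma class_act_extends s p :
  left_dom s^* p -> class_ran s^* p /\ class_act s p = left_act s p.
Proof.
rewrite /left_dom /class_ran /= !starK => sp.
split; first by exists s => //; exact: sigma_refl.
by rewrite (class_actE (sigma_refl s) sp).
Qed.

End LeftRegularAction.

Section FactorizationConverse.
Variables (S : invSemigroup) (X : topologicalType).
Local Notation "a * b" := (isg_mul a b).
Local Notation "s ^*" := (isg_star s).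

Lemma GS_act_idem_id (Y : S -> set X) ph e x : GS_top_partial_action Y ph ->
  idem e -> Y e^* x -> ph e x = x.
Proof.
case=> _ [_ [inv [_ [comp _]]]] ee Yx.
have [Y_ex ex_inv] := inv e x Yx.
rewrite -{1}(star_idem ee) in Y_ex; rewrite (star_idem ee) in ex_inv.
have [_ ex_comp] := comp e e x Yx Y_ex.
by rewrite ee in ex_comp; rewrite ex_comp ex_inv.
Qed.

Lemma factorization_E_unitary (D Y : S -> set X) (th ph : S -> X -> X) :
  GS_top_partial_action Y ph ->
  (forall s p, D s^* p -> Y s^* p /\ ph s p = th s p) ->
  (forall s, I_idem D th s -> idem s) -> E_unitary S.
Proof.
move=> GS fac Iidem e s ee es; apply: Iidem.
have se : sigma s e by exists e; split; [exact: es | exact: nleq_refl].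
have [wd _] := GS.
have th_fix p : D s^* p -> th s p = p.
  move=> /fac[Ys <-].
  have Ye : Y e^* p by rewrite -(wd _ _ (sigma_star se)).1.
  by rewrite ((wd _ _ se).2 p Ys) (GS_act_idem_id GS ee Ye).
by split=> p; [split=> [Dp|[]//]; rewrite th_fix | move=> Dp; rewrite !th_fix].
Qed.

End FactorizationConverse.

Theorem theorem7p13 (S : invSemigroup) :
  E_unitary S <->
  exists (X : topologicalType) (D : S -> set X) (th : S -> X -> X),
    top_partial_action D th /\ top_principal D th /\
    (exists (Y : S -> set X) (ph : S -> X -> X),
        GS_top_partial_action Y ph /\
        (forall s x, D (isg_star s) x -> Y (isg_star s) x /\ ph s x = th s x)) /\
    (forall s : S, idem s <-> I_idem D th s).
Proof.
split=> [HE | [X [D [th [_ [_ [[Y [ph [GS fac]]] Iidem]]]]]]].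
  exists (Sdisc S), (@left_dom S), (@left_act S).
  split; first exact: left_act_top_partial_action.
  split; first exact: left_act_top_principal.
  split; last exact: left_act_I_idem.
  exists (@class_ran S), (@class_act S); split.
    exact: class_act_GS_top_partial_action HE.
  exact: class_act_extends HE.
exact: factorization_E_unitary GS fac (fun s => (Iidem s).2).
Qed.
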